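(* Let $\lambda>0$. For every irrational $\alpha$, $\pm\lambda\in\sigma^{\mathcal{H}}$. Moreover, $\sigma^{\mathcal{H}}\cap(-\lambda,\lambda)\neq\emptyset$.
   Context: $\mathbb{T}=\mathbb{R}/\mathbb{Z}$, $\mathbb{T}_0=\{\theta\in\mathbb{T}:\cos 2\pi(n\alpha+\theta)\neq 0\ \forall n\in\mathbb{Z}\}$. For $\theta\in\mathbb{T}$, $n\in\mathbb{Z}$ put $v(\theta,n)=\cos2\pi((n-1)\alpha+\theta)$ if $n$ is odd and $v(\theta,n)=\cos 2\pi(n\alpha+\theta)$ if $n$ is even; $c(\theta,n)=\lambda$ if $n$ is odd and $c(\theta,n)=\cos2\pi(n\alpha+\theta)$ if $n$ is even. For $\theta\in\mathbb{T}_0$, $\mathcal{H}_\theta$ acts on $\ell^2(\mathbb{Z})$ by $(\mathcal{H}_\theta u)(n)=c(\theta,n)u(n+1)+c(\theta,n-1)u(n-1)+v(\theta,n)u(n)$; $\sigma^{\mathcal{H}}$ is its spectrum, independent of $\theta$. *)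

From Stdlib Require Import Reals ZArith Lra.
From Coquelicot Require Import Coquelicot.
Open Scope R_scope.

Definition irrational (a : R) : Prop :=
  forall p q : Z, q <> 0%Z -> a <> IZR p / IZR q.

(* theta in T_0 (theta taken as a real representative of R/Z;
   all quantities below are 1-periodic in theta) *)
Definition T0 (alpha theta : R) : Prop :=
  forall n : Z, cos (2 * PI * (IZR n * alpha + theta)) <> 0.

Definition vpot (alpha theta : R) (n : Z) : R :=
  if Z.odd n then cos (2 * PI * (IZR (n - 1) * alpha + theta))
  else cos (2 * PI * (IZR n * alpha + theta)).

Definition coef (lambda alpha theta : R) (n : Z) : R :=
  if Z.odd n then lambda else cos (2 * PI * (IZR n * alpha + theta)).

Definition Hop (lambda alpha theta : R) (u : Z -> R) (n : Z) : R :=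
  coef lambda alpha theta n * u (n + 1)%Z
  + coef lambda alpha theta (n - 1)%Z * u (n - 1)%Z
  + vpot alpha theta n * u n.

(* ell^2(Z): sum over Z of u(n)^2 written as a series over nat pairing n, -n-1 *)
Definition sq_terms (u : Z -> R) (k : nat) : R :=
  (u (Z.of_nat k))² + (u (- Z.of_nat k - 1)%Z)².

Definition l2 (u : Z -> R) : Prop := ex_series (sq_terms u).

Definition l2norm (u : Z -> R) : R := sqrt (Series (sq_terms u)).

Definition in_resolvent (A : (Z -> R) -> (Z -> R)) (E : R) : Prop :=
  exists G : (Z -> R) -> (Z -> R),
    (forall u, l2 u -> l2 (G u)) /\
    (exists C : R, forall u, l2 u -> l2norm (G u) <= C * l2norm u) /\
    (forall u, l2 u -> G (fun n => A u n - E * u n) = u) /\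
    (forall u, l2 u -> (fun n => A (G u) n - E * G u n) = u).

Definition in_spectrum (A : (Z -> R) -> (Z -> R)) (E : R) : Prop :=
  ~ in_resolvent A E.

From Stdlib Require Import Reals ZArith Lra Lia FunctionalExtensionality Classical.
From Coquelicot Require Import Coquelicot.
Open Scope R_scope.

(* A real [E] lies in the spectrum as soon as, for every [eta > 0], some finitely supported
   [u <> 0] has [|(H - E) u|^2 <= eta |u|^2]: a bounded inverse would force
   [|u| <= C |(H - E) u|].

   On vectors [(y 0, - y 0, y 1, - y 1, ...)] the cosine terms of [H] cancel and [H] acts as
   [l] times a shift, so the block [(-sigma)^m], [0 <= m < L], is an eigenvector for
   [sigma * l] up to two boundary defects: the ratio is [2 l^2 / L], hence [+-l] are in the
   spectrum.

   For the interior point let [nu] be the infimum of [|H u|^2 / |u|^2]. Since [H] is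
   symmetric and bounded, near-minimisers [u] make [(H^2 - nu) u] small, and the
   factorisation [H^2 - nu = (H - sqrt nu) (H + sqrt nu)] makes [sqrt nu] or [- sqrt nu] an
   approximate eigenvalue at every tolerance, so one of them is in the spectrum. A test
   vector on four sites gives [nu < l^2]; it needs [cos 2pi(2 alpha + theta) <> 0], which
   [T0] provides. *)

Fixpoint zsum (f : Z -> R) (a : Z) (len : nat) : R :=
  match len with O => 0 | S l => f a + zsum f (a + 1)%Z l end.

Lemma zsum_S f a len : zsum f a (S len) = f a + zsum f (a + 1)%Z len.
Proof. reflexivity. Qed.

Lemma zsum_1 f a : zsum f a 1 = f a.
Proof. simpl; ring. Qed.

Lemma zsum_ext f g a len :
  (forall n, (a <= n < a + Z.of_nat len)%Z -> f n = g n) -> zsum f a len = zsum g a len.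
Proof.
  revert a; induction len as [|len IH]; intros a H; simpl; [reflexivity|].
  rewrite (H a), (IH (a + 1)%Z); [reflexivity| |]; intros; try apply H; lia.
Qed.

Lemma zsum_add_len f a n m : zsum f a (n + m) = zsum f a n + zsum f (a + Z.of_nat n)%Z m.
Proof.
  revert a; induction n as [|n IH]; intros a; simpl.
  - rewrite Z.add_0_r; ring.
  - rewrite IH, Zpos_P_of_succ_nat, <- Z.add_1_l, Z.add_assoc; ring.
Qed.

Lemma zsum0 a len : zsum (fun _ => 0) a len = 0.
Proof. revert a; induction len as [|len IH]; intros; simpl; [|rewrite IH]; ring. Qed.

Lemma zsum_eq0 f a len :
  (forall n, (a <= n < a + Z.of_nat len)%Z -> f n = 0) -> zsum f a len = 0.
Proof. intros H. rewrite (zsum_ext f (fun _ => 0)) by exact H. apply zsum0. Qed.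

Lemma zsumD f g a len : zsum (fun n => f n + g n) a len = zsum f a len + zsum g a len.
Proof. revert a; induction len as [|len IH]; intros; simpl; [|rewrite IH]; ring. Qed.

Lemma zsumZ c f a len : zsum (fun n => c * f n) a len = c * zsum f a len.
Proof. revert a; induction len as [|len IH]; intros; simpl; [|rewrite IH]; ring. Qed.

Lemma zsum_le f g a len : (forall n, f n <= g n) -> zsum f a len <= zsum g a len.
Proof.
  intros H; revert a; induction len as [|len IH]; intros a; simpl; [lra|].
  specialize (IH (a + 1)%Z); specialize (H a); lra.
Qed.

Lemma zsum_shift f c a len : zsum (fun n => f (n + c)%Z) a len = zsum f (a + c)%Z len.
Proof.
  revert a; induction len as [|len IH]; intros a; simpl; [reflexivity|].
  rewrite IH, <- Z.add_assoc, (Z.add_comm 1 c), Z.add_assoc; reflexivity.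
Qed.

Lemma zsum_window f p k a len :
  (forall n, (n < p \/ p + Z.of_nat k <= n)%Z -> f n = 0) ->
  (a <= p)%Z -> (p + Z.of_nat k <= a + Z.of_nat len)%Z ->
  zsum f a len = zsum f p k.
Proof.
  intros Hf H1 H2.
  replace len with (Z.to_nat (p - a) + k + (len - Z.to_nat (p - a) - k))%nat by lia.
  rewrite !zsum_add_len, (zsum_eq0 f a) by (intros; apply Hf; lia).
  rewrite (zsum_eq0 f (a + Z.of_nat (Z.to_nat (p - a) + k))%Z) by (intros; apply Hf; lia).
  replace (a + Z.of_nat (Z.to_nat (p - a)))%Z with p by lia. ring.
Qed.

Lemma zsum_pairs f a k :
  zsum f (2 * a) (2 * k) = zsum (fun m => f (2 * m)%Z + f (2 * m + 1)%Z) a k.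
Proof.
  revert a; induction k as [|k IH]; intros a; [reflexivity|].
  replace (2 * S k)%nat with (S (S (2 * k))) by lia.
  rewrite !zsum_S, <- IH. replace (2 * a + 1 + 1)%Z with (2 * (a + 1))%Z by lia. ring.
Qed.

Definition zindicator (p q n : Z) : R := if ((p <=? n)%Z && (n <? q)%Z)%bool then 1 else 0.

Lemma zsum_const c a len : zsum (fun _ => c) a len = INR len * c.
Proof. revert a; induction len as [|len IH]; intros; rewrite ?zsum_S, ?IH, ?S_INR; simpl; ring. Qed.

Lemma zsum_indicator p q a len : (a <= p <= q)%Z -> (q <= a + Z.of_nat len)%Z ->
  zsum (zindicator p q) a len = IZR (q - p).
Proof.
  intros Hp Hq.
  assert (Hk : (p + Z.of_nat (Z.to_nat (q - p)) = q)%Z) by lia.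
  rewrite (zsum_window _ p (Z.to_nat (q - p))), (zsum_ext _ (fun _ => 1)), zsum_const;
    rewrite ?Hk; try lia.
  - rewrite INR_IZR_INZ, Z2Nat.id by lia. ring.
  all: intros n Hn; unfold zindicator.
  all: destruct (Z.leb_spec p n), (Z.ltb_spec n q); simpl; lia || reflexivity.
Qed.

(* Support in [[-N-1, N]]: the sites seen by the first [N+1] terms of [sq_terms]. *)
Definition supported (N : nat) (f : Z -> R) : Prop :=
  forall n, (n < - Z.of_nat N - 1 \/ Z.of_nat N < n)%Z -> f n = 0.

Definition wsum (f : Z -> R) (N : nat) : R := zsum f (- Z.of_nat N - 1)%Z (2 * N + 2).

Lemma supported_le N M f : (N <= M)%nat -> supported N f -> supported M f.
Proof. intros Hl H n Hn; apply H; lia. Qed.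

Lemma supported_mul N u v : supported N u -> supported N (fun n => u n * v n).
Proof. intros Hu n Hn. rewrite Hu by lia. ring. Qed.

Lemma supported_of_sqr N f g : (forall n, f n * f n = g n) -> supported N g -> supported N f.
Proof.
  intros Hfg Hg n Hn. specialize (Hg n Hn). rewrite <- Hfg in Hg.
  destruct (Rmult_integral _ _ Hg); assumption.
Qed.

Lemma zsum_supported f N a len : supported N f ->
  (a <= - Z.of_nat N - 1)%Z -> (Z.of_nat N + 1 <= a + Z.of_nat len)%Z ->
  zsum f a len = wsum f N.
Proof. intros Hf H1 H2. apply zsum_window; [intros n Hn; apply Hf|..]; lia. Qed.

Lemma wsum_supported_le f N M : (N <= M)%nat -> supported N f -> wsum f M = wsum f N.
Proof. intros Hl Hf. apply zsum_supported; auto; lia. Qed.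

Lemma wsum_shift g N c : (c = 1 \/ c = -1)%Z -> supported N g ->
  wsum (fun n => g (n + c)%Z) (S N) = wsum g (S N).
Proof.
  intros Hc Hg. rewrite (wsum_supported_le g N (S N)) by (auto; lia).
  unfold wsum at 1. rewrite zsum_shift. apply zsum_supported; auto; lia.
Qed.

Lemma wsum_le f g N : (forall n, f n <= g n) -> wsum f N <= wsum g N.
Proof. apply zsum_le. Qed.

Lemma wsum_S f N :
  wsum f (S N) = f (- Z.of_nat N - 2)%Z + wsum f N + f (Z.of_nat N + 1)%Z.
Proof.
  unfold wsum. replace (2 * S N + 2)%nat with (S ((2 * N + 2) + 1)) by lia.
  rewrite zsum_S, zsum_add_len, zsum_1.
  replace (- Z.of_nat (S N) - 1)%Z with (- Z.of_nat N - 2)%Z by lia.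
  replace (- Z.of_nat N - 2 + 1)%Z with (- Z.of_nat N - 1)%Z by lia.
  replace (- Z.of_nat N - 1 + Z.of_nat (2 * N + 2))%Z with (Z.of_nat N + 1)%Z by lia.
  ring.
Qed.

Definition ip_terms (u v : Z -> R) (k : nat) : R :=
  u (Z.of_nat k) * v (Z.of_nat k) + u (- Z.of_nat k - 1)%Z * v (- Z.of_nat k - 1)%Z.

Definition ip (u v : Z -> R) : R := Series (ip_terms u v).

Lemma sum_n_ip_terms u v N :
  @eq R (sum_n (ip_terms u v) N) (wsum (fun n => u n * v n) N).
Proof.
  induction N as [|N IH].
  - rewrite sum_O. unfold wsum, ip_terms. simpl. ring.
  - rewrite sum_Sn, IH, wsum_S. change (plus ?x ?y) with (x + y). unfold ip_terms.
    replace (- Z.of_nat (S N) - 1)%Z with (- Z.of_nat N - 2)%Z by lia.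
    replace (Z.of_nat (S N)) with (Z.of_nat N + 1)%Z by lia.
    ring.
Qed.

Lemma is_series_eventually0 (a : nat -> R) N :
  (forall k, (N < k)%nat -> a k = 0) -> is_series a (sum_n a N).
Proof.
  intros H. apply filterlim_ext_loc with (f := fun _ => sum_n a N); [|apply filterlim_const].
  exists N. intros n Hn. induction Hn as [|n Hn IH]; [reflexivity|].
  rewrite IH, sum_Sn, (H (S n)) by lia. exact (eq_sym (plus_zero_r _)).
Qed.

Lemma is_series_ip_terms u v N : supported N u ->
  is_series (ip_terms u v) (wsum (fun n => u n * v n) N).
Proof.
  intros Hu. rewrite <- sum_n_ip_terms. apply is_series_eventually0.
  intros k Hk. unfold ip_terms. rewrite !Hu by lia. ring.
Qed.

Lemma ip_supported u v N : supported N u -> ip u v = wsum (fun n => u n * v n) N.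
Proof. intros Hu. exact (is_series_unique _ _ (is_series_ip_terms u v N Hu)). Qed.

Lemma ip_comm u v : ip u v = ip v u.
Proof. apply Series_ext. intros; unfold ip_terms; ring. Qed.

Lemma ip_linear_r u v w x y N : supported N u ->
  ip u (fun n => x * v n + y * w n) = x * ip u v + y * ip u w.
Proof.
  intros Hu. rewrite !(ip_supported u _ N Hu).
  unfold wsum. rewrite <- !zsumZ, <- zsumD. apply zsum_ext. intros; ring.
Qed.

Lemma ip_ge0 u N : supported N u -> 0 <= ip u u.
Proof.
  intros Hu. rewrite (ip_supported u u N Hu), <- (zsum0 (- Z.of_nat N - 1) (2 * N + 2)).
  apply wsum_le. intros; nra.
Qed.

Lemma ip_sqr_lin f g s N : supported N f -> supported N g ->
  ip (fun n => f n + s * g n) (fun n => f n + s * g n)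
  = ip f f + 2 * s * ip f g + s * s * ip g g.
Proof.
  intros Hf Hg.
  assert (Hfg : supported N (fun n => f n + s * g n))
    by (intros n Hn; rewrite Hf, Hg by lia; ring).
  rewrite (ip_supported _ _ _ Hfg), (ip_supported f f N Hf), (ip_supported f g N Hf),
    (ip_supported g g N Hg).
  unfold wsum. rewrite <- !zsumZ, <- !zsumD. apply zsum_ext. intros; ring.
Qed.

Lemma l2_supported u N : supported N u -> l2 u.
Proof.
  intros Hu. apply (ex_series_ext (ip_terms u u)).
  - intros k; change (ip_terms u u k = sq_terms u k).
    unfold ip_terms, sq_terms, Rsqr; ring.
  - eexists. exact (is_series_ip_terms u u N Hu).
Qed.

Lemma l2norm_ip u : l2norm u = sqrt (ip u u).
Proof. reflexivity. Qed.

Definition approx_eigen (A : (Z -> R) -> Z -> R) (E eta : R) : Prop :=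
  exists N u, supported N u /\ supported N (fun n => A u n - E * u n) /\ 0 < ip u u /\
    ip (fun n => A u n - E * u n) (fun n => A u n - E * u n) <= eta * ip u u.

Lemma approx_eigen_le A E eta eta' : eta <= eta' -> approx_eigen A E eta -> approx_eigen A E eta'.
Proof.
  intros Hle [N [u [Hu [Hr [Hpos Hsmall]]]]]. exists N, u. repeat split; auto. nra.
Qed.

Lemma spectrum_of_approx_eigen A E :
  (forall eta, 0 < eta -> approx_eigen A E eta) -> in_spectrum A E.
Proof.
  intros Happrox [G [_ [[C HC] [HGA _]]]].
  destruct (Happrox (/ (C * C + 1))) as [N [u [Hu [Hr [Hpos Hsmall]]]]].
  { apply Rinv_0_lt_compat; nra. }
  set (r := fun n => A u n - E * u n) in *.
  pose proof (HC r (l2_supported r N Hr)) as Hbound.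
  pose proof (HGA u (l2_supported u N Hu)) as HGr. fold r in HGr.
  rewrite HGr, !l2norm_ip in Hbound.
  pose proof (sqrt_lt_R0 _ Hpos). pose proof (sqrt_pos (ip r r)).
  pose proof (sqrt_sqrt _ (Rlt_le _ _ Hpos)). pose proof (sqrt_sqrt _ (ip_ge0 r N Hr)).
  assert (Hinv : ip u u <= C * C * ip r r) by nra.
  assert (C * C * / (C * C + 1) < 1).
  { apply (Rmult_lt_reg_r (C * C + 1)); [nra|]. rewrite Rmult_assoc, Rinv_l by nra. nra. }
  nra.
Qed.

Definition jacobi (c v u : Z -> R) (n : Z) : R :=
  c n * u (n + 1)%Z + c (n - 1)%Z * u (n - 1)%Z + v n * u n.

Lemma sqr_lin3_le K c1 c2 c3 x1 x2 x3 :
  c1 * c1 <= K -> c2 * c2 <= K -> c3 * c3 <= K ->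
  (c1 * x1 + c2 * x2 + c3 * x3) * (c1 * x1 + c2 * x2 + c3 * x3)
  <= 3 * K * (x1 * x1 + x2 * x2 + x3 * x3).
Proof.
  intros H1 H2 H3.
  assert (c1 * x1 * (c1 * x1) <= K * (x1 * x1)) by nra.
  assert (c2 * x2 * (c2 * x2) <= K * (x2 * x2)) by nra.
  assert (c3 * x3 * (c3 * x3) <= K * (x3 * x3)) by nra.
  pose proof (Rle_0_sqr (c1 * x1 - c2 * x2)). pose proof (Rle_0_sqr (c2 * x2 - c3 * x3)).
  pose proof (Rle_0_sqr (c1 * x1 - c3 * x3)). unfold Rsqr in *. nra.
Qed.

Section Jacobi.
Variables c v : Z -> R.

Lemma jacobi_lin u w s n :
  jacobi c v (fun k => u k + s * w k) n = jacobi c v u n + s * jacobi c v w n.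
Proof. unfold jacobi. ring. Qed.

Lemma jacobi_supported N u : supported N u -> supported (S N) (jacobi c v u).
Proof. intros Hu n Hn. unfold jacobi. rewrite !Hu by lia. ring. Qed.

Lemma jacobi_sym N u w : supported N u -> supported N w ->
  ip (jacobi c v u) w = ip u (jacobi c v w).
Proof.
  intros Hu Hw.
  rewrite (ip_supported _ _ (S N) (jacobi_supported N u Hu)),
    (ip_supported u _ (S N) (supported_le N (S N) u ltac:(lia) Hu)).
  set (g1 := fun n => u n * (c n * w (n + 1)%Z)).
  set (g2 := fun n => u n * (c (n - 1)%Z * w (n - 1)%Z)).
  set (g3 := fun n => u n * (v n * w n)).
  transitivity (wsum (fun n => g1 (n + -1)%Z) (S N) + wsum (fun n => g2 (n + 1)%Z) (S N)
                + wsum g3 (S N)).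
  - unfold wsum. rewrite <- !zsumD. apply zsum_ext. intros n _. unfold jacobi, g1, g2, g3.
    replace (n + -1 + 1)%Z with n by lia. replace (n + 1 - 1)%Z with n by lia.
    replace (n + -1)%Z with (n - 1)%Z by lia. ring.
  - rewrite !wsum_shift by (try apply supported_mul; auto; lia).
    unfold wsum. rewrite <- !zsumD. apply zsum_ext. intros n _. unfold jacobi, g1, g2, g3. ring.
Qed.

Lemma jacobi_bound K N u : (forall n, c n * c n <= K) -> (forall n, v n * v n <= K) ->
  supported N u -> ip (jacobi c v u) (jacobi c v u) <= 9 * K * ip u u.
Proof.
  intros Hc Hv Hu.
  set (g := fun n => u n * u n).
  assert (Hg : supported N g) by (apply supported_mul, Hu).
  rewrite (ip_supported _ _ (S N) (jacobi_supported N u Hu)), (ip_supported u u N Hu).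
  fold g. rewrite <- (wsum_supported_le g N (S N)) by (auto; lia).
  apply Rle_trans with
    (wsum (fun n => 3 * K * g (n + 1)%Z + 3 * K * g (n + -1)%Z + 3 * K * g n) (S N)).
  - apply wsum_le. intros n. unfold jacobi, g. replace (n + -1)%Z with (n - 1)%Z by lia.
    rewrite <- !Rmult_plus_distr_l. apply sqr_lin3_le; auto.
  - unfold wsum. rewrite !zsumD, !zsumZ. fold (wsum (fun n => g (n + 1)%Z) (S N)).
    fold (wsum (fun n => g (n + -1)%Z) (S N)) (wsum g (S N)).
    rewrite !wsum_shift by (auto; lia). lra.
Qed.

End Jacobi.

Section SymmetricOperator.
Variable A : (Z -> R) -> Z -> R.
Hypothesis A_lin : forall u w s n, A (fun k => u k + s * w k) n = A u n + s * A w n.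
Hypothesis A_supported : forall N u, supported N u -> supported (S N) (A u).
Hypothesis A_sym : forall N u w, supported N u -> supported N w -> ip (A u) w = ip u (A w).
Variable M : R.
Hypothesis M_pos : 0 < M.
Hypothesis A_bound : forall N u, supported N u -> ip (A u) (A u) <= M * ip u u.

Lemma ip_A_ge0 N u : supported N u -> 0 <= ip (A u) (A u).
Proof. intros Hu. exact (ip_ge0 _ (S N) (A_supported N u Hu)). Qed.

Definition lower_rayleigh (nu : R) : Prop :=
  forall N u, supported N u -> nu * ip u u <= ip (A u) (A u).

Lemma rayleigh_inf : exists nu, 0 <= nu /\ lower_rayleigh nu /\
  forall eps, 0 < eps -> exists N u,
    supported N u /\ 0 < ip u u /\ ip (A u) (A u) <= (nu + eps) * ip u u.
Proof.
  set (delta0 := fun n : Z => if Z.eqb n 0 then 1 else 0).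
  assert (Hdelta : supported 0 delta0).
  { intros n Hn. unfold delta0. destruct (Z.eqb_spec n 0); [lia|reflexivity]. }
  assert (Hdelta1 : ip delta0 delta0 = 1).
  { rewrite (ip_supported _ _ _ Hdelta). unfold wsum, delta0. simpl. ring. }
  assert (Hub : forall N u, supported N u -> 0 < ip u u ->
            is_upper_bound lower_rayleigh (ip (A u) (A u) / ip u u)).
  { intros N u Hu Hpos x Hx. apply Rmult_le_reg_r with (ip u u); [exact Hpos|].
    unfold Rdiv. rewrite Rmult_assoc, Rinv_l, Rmult_1_r by lra. exact (Hx N u Hu). }
  assert (H0 : lower_rayleigh 0) by (intros N u Hu; rewrite Rmult_0_l; exact (ip_A_ge0 N u Hu)).
  destruct (completeness lower_rayleigh) as [nu [Hnu Hleast]].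
  { exists (ip (A delta0) (A delta0) / ip delta0 delta0).
    apply (Hub 0%nat); [exact Hdelta| lra]. }
  { exists 0. exact H0. }
  assert (Hlower : lower_rayleigh nu).
  { intros N u Hu. destruct (Rle_lt_or_eq_dec 0 (ip u u) (ip_ge0 u N Hu)) as [Hpos|Hz].
    - pose proof (Hleast _ (Hub N u Hu Hpos)) as Hle.
      apply Rmult_le_compat_r with (r := ip u u) in Hle; [|lra].
      unfold Rdiv in Hle. rewrite Rmult_assoc, Rinv_l, Rmult_1_r in Hle by lra. exact Hle.
    - rewrite <- Hz, Rmult_0_r. exact (ip_A_ge0 N u Hu). }
  exists nu. split; [exact (Hnu 0 H0)|]. split; [exact Hlower|].
  intros eps Heps. apply NNPP. intros Hnone.
  assert (nu + eps <= nu); [|lra].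
  apply Hnu. intros N u Hu.
  destruct (Rle_lt_or_eq_dec 0 (ip u u) (ip_ge0 u N Hu)) as [Hpos|Hz].
  - apply Rlt_le, Rnot_le_lt. intros Hle. apply Hnone. exists N, u. auto.
  - rewrite <- Hz, Rmult_0_r. exact (ip_A_ge0 N u Hu).
Qed.

Lemma A_lin_fun u w s : A (fun k => u k + s * w k) = fun n => A u n + s * A w n.
Proof. apply functional_extensionality. intros n. apply A_lin. Qed.

(* Perturbing a near-minimiser [u] of the Rayleigh quotient of [A^2] in the direction of
   [z = (A^2 - nu) u], with step [-1/M], shows that [z] itself must be small. *)
Lemma near_minimizer_residual nu delta N u :
  0 <= nu -> lower_rayleigh nu -> supported N u ->
  ip (A u) (A u) <= (nu + delta) * ip u u ->
  let z := fun n => A (A u) n - nu * u n in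
  ip z z <= M * delta * ip u u.
Proof.
  intros Hnu Hlower Hu Hnear z.
  set (N2 := S (S N)).
  assert (Su : supported N2 u) by (apply supported_le with N; [unfold N2; lia|exact Hu]).
  assert (SAu : supported N2 (A u)) by (apply supported_le with (S N); [unfold N2; lia|auto]).
  assert (SAAu : supported N2 (A (A u))) by (apply A_supported, A_supported, Hu).
  assert (Sz : supported N2 z).
  { intros n Hn. unfold z. rewrite Su, SAAu by lia. ring. }
  set (s := - / M).
  assert (Hv := Hlower N2 (fun n => u n + s * z n) ltac:(intros n Hn; rewrite Su, Sz by lia; ring)).
  rewrite (ip_sqr_lin u z s N2 Su Sz), A_lin_fun in Hv.
  assert (SAu' : supported (S N2) (A u)) by (apply supported_le with N2; [lia|exact SAu]).
  rewrite (ip_sqr_lin (A u) (A z) s (S N2) SAu' (A_supported N2 z Sz)) in Hv.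
  rewrite <- (A_sym N2 (A u) z SAu Sz) in Hv.
  assert (Hzz : ip z z = ip (A (A u)) z - nu * ip u z).
  { rewrite (ip_comm (A (A u))), (ip_comm u).
    replace (ip z (A (A u)) - nu * ip z u) with (1 * ip z (A (A u)) + - nu * ip z u) by ring.
    rewrite <- (ip_linear_r z _ _ 1 (- nu) N2 Sz).
    f_equal. apply functional_extensionality. intros n. unfold z. ring. }
  assert (HAz : ip (A z) (A z) <= M * ip z z) by exact (A_bound N2 z Sz).
  assert (Hz0 : 0 <= ip z z) by exact (ip_ge0 z N2 Sz).
  assert (Ht : 0 < / M) by (apply Rinv_0_lt_compat; lra).
  assert (Hss : s * s = / M * / M) by (unfold s; ring).
  assert (Hdrop : 0 <= nu * (s * s * ip z z)) by (rewrite Hss; apply Rmult_le_pos; nra).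
  assert (HAz' : s * s * ip (A z) (A z) <= / M * ip z z).
  { rewrite Hss. replace (/ M * ip z z) with (/ M * / M * (M * ip z z)) by (field; lra).
    apply Rmult_le_compat_l; nra. }
  assert (Hlin : 2 * s * (ip (A (A u)) z - nu * ip u z) = - 2 * (/ M * ip z z))
    by (rewrite <- Hzz; unfold s; ring).
  assert (Hsmall : / M * ip z z <= delta * ip u u) by nra.
  apply Rmult_le_compat_l with (r := M) in Hsmall; [|lra].
  rewrite <- Rmult_assoc, Rinv_r, Rmult_1_l, <- Rmult_assoc in Hsmall by lra.
  exact Hsmall.
Qed.

(* [(A - mu) (A + mu) = A^2 - mu^2]: if [(A + mu) u] is small, [u] is an approximate
   eigenvector for [-mu]; otherwise [(A + mu) u] is one for [mu]. *)
Lemma approx_eigen_of_sq_residual mu eta N u : 0 < eta -> supported N u -> 0 < ip u u ->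
  ip (fun n => A (A u) n - mu * mu * u n) (fun n => A (A u) n - mu * mu * u n)
  <= eta * eta * ip u u ->
  approx_eigen A mu eta \/ approx_eigen A (- mu) eta.
Proof.
  intros Heta Hu Hpos Hres.
  set (x := fun n => A u n + mu * u n).
  assert (Sx : supported (S N) x).
  { intros n Hn. unfold x. rewrite (A_supported N u Hu), Hu by lia. ring. }
  destruct (Rle_or_lt (eta * ip u u) (ip x x)) as [Hbig|Hsmall].
  - left. exists (S (S N)), x.
    replace (fun n => A x n - mu * x n) with (fun n => A (A u) n - mu * mu * u n).
    2: { apply functional_extensionality. intros n. unfold x. rewrite A_lin. ring. }
    repeat split.
    + apply supported_le with (S N); [lia|exact Sx].
    + intros n Hn. rewrite (A_supported (S N) (A u) (A_supported N u Hu)), Hu by lia. ring.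
    + nra.
    + nra.
  - right. exists (S N), u.
    replace (fun n => A u n - - mu * u n) with x.
    2: { apply functional_extensionality. intros n. unfold x. ring. }
    repeat split; [apply supported_le with N; [lia|exact Hu]| exact Sx | exact Hpos | lra].
Qed.

Lemma sqrt_rayleigh_inf_approx_eigen : exists mu, 0 <= mu /\ lower_rayleigh (mu * mu) /\
  forall eta, 0 < eta -> approx_eigen A mu eta \/ approx_eigen A (- mu) eta.
Proof.
  destruct rayleigh_inf as [nu [Hnu [Hlower Hnear]]].
  exists (sqrt nu). rewrite sqrt_sqrt by exact Hnu.
  split; [apply sqrt_pos|]. split; [exact Hlower|].
  intros eta Heta.
  destruct (Hnear (eta * eta / M)) as [N [u [Hu [Hpos Hle]]]].
  { apply Rdiv_lt_0_compat; nra. }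
  apply (approx_eigen_of_sq_residual (sqrt nu) eta N u Heta Hu Hpos).
  rewrite sqrt_sqrt by exact Hnu.
  eapply Rle_trans; [exact (near_minimizer_residual nu _ N u Hnu Hlower Hu Hle)|].
  right. field. lra.
Qed.

End SymmetricOperator.

Lemma spectrum_of_approx_eigen_or A E E' :
  (forall eta, 0 < eta -> approx_eigen A E eta \/ approx_eigen A E' eta) ->
  in_spectrum A E \/ in_spectrum A E'.
Proof.
  intros Hor.
  destruct (classic (forall eta, 0 < eta -> approx_eigen A E eta)) as [HE|HnE].
  - left. exact (spectrum_of_approx_eigen A E HE).
  - right. apply spectrum_of_approx_eigen. intros eta Heta.
    apply not_all_ex_not in HnE. destruct HnE as [eta0 HnE0].
    apply imply_to_and in HnE0. destruct HnE0 as [Heta0 HnE0].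
    destruct (Hor (Rmin eta eta0) (Rmin_glb_lt _ _ _ Heta Heta0)) as [H|H].
    + exfalso. exact (HnE0 (approx_eigen_le A E _ _ (Rmin_r eta eta0) H)).
    + exact (approx_eigen_le A E' _ _ (Rmin_l eta eta0) H).
Qed.

Definition interleave (y z : Z -> R) (n : Z) : R :=
  if Z.odd n then z (Z.div2 n) else y (Z.div2 n).

Lemma interleave_even y z m : interleave y z (2 * m) = y m.
Proof.
  unfold interleave. rewrite Z.odd_even. f_equal.
  pose proof (Zdiv2_odd_eqn (2 * m)) as e. rewrite Z.odd_even in e. lia.
Qed.

Lemma interleave_odd y z m : interleave y z (2 * m + 1) = z m.
Proof.
  unfold interleave. rewrite Z.odd_odd. f_equal.
  pose proof (Zdiv2_odd_eqn (2 * m + 1)) as e. rewrite Z.odd_odd in e. lia.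
Qed.

Section HopOperator.
Variables l a th : R.

Definition even_cos (m : Z) : R := cos (2 * PI * (IZR (2 * m) * a + th)).

Lemma Hop_interleave_even y z m :
  Hop l a th (interleave y z) (2 * m) = even_cos m * (y m + z m) + l * z (m - 1)%Z.
Proof.
  unfold Hop, coef, vpot, even_cos. rewrite Z.odd_even.
  replace (2 * m - 1)%Z with (2 * (m - 1) + 1)%Z by lia.
  rewrite Z.odd_odd, interleave_even, !interleave_odd. ring.
Qed.

Lemma Hop_interleave_odd y z m :
  Hop l a th (interleave y z) (2 * m + 1) = even_cos m * (y m + z m) + l * y (m + 1)%Z.
Proof.
  unfold Hop, coef, vpot, even_cos. rewrite Z.odd_odd.
  replace (2 * m + 1 - 1)%Z with (2 * m)%Z by lia.
  replace (2 * m + 1 + 1)%Z with (2 * (m + 1))%Z by lia.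
  rewrite Z.odd_even, !interleave_even, interleave_odd. ring.
Qed.

Lemma Hop_interleave_opp_even y m :
  Hop l a th (interleave y (fun k => - y k)) (2 * m) = - l * y (m - 1)%Z.
Proof. rewrite Hop_interleave_even. ring. Qed.

Lemma Hop_interleave_opp_odd y m :
  Hop l a th (interleave y (fun k => - y k)) (2 * m + 1) = l * y (m + 1)%Z.
Proof. rewrite Hop_interleave_odd. ring. Qed.

End HopOperator.

Definition sgn (s : bool) : R := if s then 1 else -1.

(* [(-sgn s)^m] on [0 <= m < L], interleaved with its negative: away from the two ends of
   the block, [Hop] acts on it as multiplication by [sgn s * l]. *)
Definition alt_block (s : bool) (L : nat) (m : Z) : R :=
  if ((0 <=? m)%Z && (m <? Z.of_nat L)%Z)%bool then (if Z.even m then 1 else - sgn s) else 0.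

Definition trunc_eigvec (s : bool) (L : nat) : Z -> R :=
  interleave (alt_block s L) (fun m => - alt_block s L m).

Ltac destruct_Zcmp :=
  repeat (match goal with
          | |- context [Z.leb ?x ?y] => destruct (Z.leb_spec x y)
          | |- context [Z.ltb ?x ?y] => destruct (Z.ltb_spec x y)
          end; cbn [andb]; try (exfalso; lia)).

Lemma trunc_eigvec_sqr s L n :
  trunc_eigvec s L n * trunc_eigvec s L n = zindicator 0 (2 * Z.of_nat L) n.
Proof.
  unfold trunc_eigvec.
  destruct (Z.Even_or_Odd n) as [[m ->]|[m ->]];
    rewrite ?interleave_even, ?interleave_odd; unfold alt_block, zindicator;
    destruct_Zcmp; destruct (Z.even m), s; unfold sgn; ring.
Qed.

Lemma trunc_eigvec_residual_sqr l a th s L n : (1 <= L)%nat ->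
  let r := fun n => Hop l a th (trunc_eigvec s L) n - sgn s * l * trunc_eigvec s L n in
  r n * r n
  = l * l * (zindicator (-1) 1 n + zindicator (2 * Z.of_nat L - 1) (2 * Z.of_nat L + 1) n).
Proof.
  intros HL r. unfold r, trunc_eigvec.
  destruct (Z.Even_or_Odd n) as [[m ->]|[m ->]];
    rewrite ?Hop_interleave_opp_even, ?Hop_interleave_opp_odd, ?interleave_even, ?interleave_odd;
    unfold alt_block, zindicator; rewrite ?Z.even_add, ?Z.even_sub; destruct_Zcmp;
    destruct (Z.even m), s; unfold sgn; cbn; ring.
Qed.

Lemma Hop_spectrum_sgn l a th s : 0 < l -> in_spectrum (Hop l a th) (sgn s * l).
Proof.
  intros Hl. apply spectrum_of_approx_eigen. intros eta Heta.
  destruct (INR_archimed eta (2 * l * l) Heta) as [L HL].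
  assert (HL1 : (1 <= L)%nat) by (destruct L; [simpl in HL; nra|lia]).
  set (w := trunc_eigvec s L).
  set (r := fun n => Hop l a th w n - sgn s * l * w n).
  set (N := (2 * L + 1)%nat).
  assert (Sw : supported N w).
  { apply supported_of_sqr with (zindicator 0 (2 * Z.of_nat L)); [apply trunc_eigvec_sqr|].
    intros n Hn. unfold zindicator, N in *. destruct_Zcmp; reflexivity. }
  assert (Sr : supported N r).
  { eapply supported_of_sqr; [exact (fun n => trunc_eigvec_residual_sqr l a th s L n HL1)|].
    intros n Hn. unfold zindicator, N in *. destruct_Zcmp; ring. }
  assert (Hw : ip w w = 2 * INR L).
  { rewrite (ip_supported w w N Sw). unfold wsum.
    rewrite (zsum_ext _ _ _ _ (fun n _ => trunc_eigvec_sqr s L n)), zsum_indicator by lia.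
    rewrite Z.sub_0_r, mult_IZR, <- INR_IZR_INZ. reflexivity. }
  assert (Hr : ip r r = 4 * (l * l)).
  { rewrite (ip_supported r r N Sr). unfold wsum.
    rewrite (zsum_ext _ _ _ _ (fun n _ => trunc_eigvec_residual_sqr l a th s L n HL1)).
    rewrite zsumZ, zsumD, !zsum_indicator by lia.
    replace (2 * Z.of_nat L + 1 - (2 * Z.of_nat L - 1))%Z with 2%Z by lia. simpl. ring. }
  exists N, w. repeat split; auto; fold r; rewrite ?Hw, ?Hr; nra.
Qed.

Lemma Hop_bound l a th N u : supported N u ->
  ip (Hop l a th u) (Hop l a th u) <= 9 * (l * l + 1) * ip u u.
Proof.
  apply jacobi_bound; intros n; unfold coef, vpot.
  - destruct (Z.odd n); [nra|]. pose proof (COS_bound (2 * PI * (IZR n * a + th))). nra.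
  - destruct (Z.odd n);
      match goal with |- cos ?x * _ <= _ => pose proof (COS_bound x) end; nra.
Qed.

(* The antisymmetric pair at sites 0, 1 plus [t] times the symmetric pair at sites 2, 3:
   for [t = l / (4 c)] one gets [|H w|^2 - l^2 |w|^2 = - l^2 / 2]. *)
Lemma Hop_test_vector l a th : even_cos a th 1 <> 0 -> 0 < l ->
  exists N w, supported N w /\ 0 < ip w w /\ ip (Hop l a th w) (Hop l a th w) < l * l * ip w w.
Proof.
  intros Hc Hl.
  set (c := even_cos a th 1) in *.
  set (t := l / (4 * c)).
  set (y := fun m : Z => if Z.eqb m 0 then 1 else if Z.eqb m 1 then t else 0).
  set (z := fun m : Z => if Z.eqb m 0 then -1 else if Z.eqb m 1 then t else 0).
  set (w := interleave y z).
  assert (Sw : supported 3 w).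
  { intros n Hn. unfold w, interleave. pose proof (Zdiv2_odd_eqn n).
    unfold y, z. destruct (Z.odd n), (Z.eqb_spec (Z.div2 n) 0), (Z.eqb_spec (Z.div2 n) 1);
    lia || reflexivity. }
  assert (Hw : ip w w = 2 + 2 * t * t).
  { rewrite (ip_supported _ _ _ Sw). unfold wsum.
    change (- Z.of_nat 3 - 1)%Z with (2 * -2)%Z. change (2 * 3 + 2)%nat with (2 * 4)%nat.
    rewrite zsum_pairs.
    rewrite (zsum_ext _ (fun m => y m * y m + z m * z m))
      by (intros; unfold w; rewrite interleave_even, interleave_odd; reflexivity).
    unfold y, z. simpl. ring. }
  assert (HHw : ip (Hop l a th w) (Hop l a th w)
                = 2 * l * l - 4 * t * c * l + t * t * (2 * l * l + 8 * c * c)).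
  { assert (SHw : supported 4 (Hop l a th w)) by exact (jacobi_supported _ _ 3 w Sw).
    rewrite (ip_supported _ _ _ SHw), <- (zsum_supported _ 4 (2 * -3) (2 * 6))
      by (auto using supported_mul; lia).
    rewrite zsum_pairs.
    rewrite (zsum_ext _ (fun m =>
        (even_cos a th m * (y m + z m) + l * z (m - 1)%Z)
        * (even_cos a th m * (y m + z m) + l * z (m - 1)%Z)
      + (even_cos a th m * (y m + z m) + l * y (m + 1)%Z)
        * (even_cos a th m * (y m + z m) + l * y (m + 1)%Z)))
      by (intros; unfold w; rewrite Hop_interleave_even, Hop_interleave_odd; reflexivity).
    unfold y, z. simpl. fold c. ring. }
  exists 3%nat, w. split; [exact Sw|]. rewrite Hw, HHw. split; [nra|].
  assert (Hgap : 2 * l * l - 4 * t * c * l + t * t * (2 * l * l + 8 * c * c)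
                 - l * l * (2 + 2 * t * t) = - (l * l) / 2) by (unfold t; field; exact Hc).
  assert (0 < l * l / 2) by (apply Rdiv_lt_0_compat; nra).
  lra.
Qed.

Theorem corollary3p5 (lambda alpha : R) :
  0 < lambda -> irrational alpha ->
  forall theta : R, T0 alpha theta ->
    in_spectrum (Hop lambda alpha theta) lambda /\
    in_spectrum (Hop lambda alpha theta) (- lambda) /\
    (exists E : R, - lambda < E < lambda /\ in_spectrum (Hop lambda alpha theta) E).
Proof.
  intros Hl _ theta HT0.
  pose proof (Hop_spectrum_sgn lambda alpha theta true Hl) as Hplus.
  pose proof (Hop_spectrum_sgn lambda alpha theta false Hl) as Hminus.
  unfold sgn in Hplus, Hminus.
  rewrite Rmult_1_l in Hplus. replace (-1 * lambda) with (- lambda) in Hminus by ring.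
  split; [exact Hplus|]. split; [exact Hminus|].
  assert (HM : 0 < 9 * (lambda * lambda + 1)) by nra.
  destruct (sqrt_rayleigh_inf_approx_eigen (Hop lambda alpha theta)
              (jacobi_lin _ _) (jacobi_supported _ _) (jacobi_sym _ _) _ HM
              (Hop_bound lambda alpha theta)) as [mu [Hmu [Hlower Happrox]]].
  destruct (Hop_test_vector lambda alpha theta (HT0 2%Z) Hl) as [N [w [Sw [Hwpos Hwlow]]]].
  assert (Hmu2 : mu * mu < lambda * lambda).
  { apply (Rmult_lt_reg_r (ip w w)); [exact Hwpos|]. specialize (Hlower N w Sw). lra. }
  assert (Hmul : mu < lambda) by nra.
  destruct (spectrum_of_approx_eigen_or _ _ _ Happrox) as [Hs|Hs];
    [exists mu|exists (- mu)]; split; auto; lra.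
Qed.
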